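(* Let $G$ be a finite group and $T$ a $G$-Tambara functor. The product of two finitely generated Tambara ideals of $T$ is finitely generated.
   Context: All rings are commutative with unit. A $G$-Tambara functor $T$ consists of commutative rings $T(G/H)$ for subgroups $H\le G$ with restriction ring maps, additive transfer maps, multiplicative norm maps and conjugation isomorphisms satisfying the standard Tambara axioms (Hill–Mazur). A Tambara ideal is a family of ring ideals $I(G/H)\subseteq T(G/H)$ closed under restriction, transfer, norm and conjugation. A Tambara ideal is finitely generated if it equals $\langle x_1,\dots,x_n\rangle$, the smallest Tambara ideal containing finitely many elements $x_i\in T(G/H_i)$ at their respective levels. The product $IJ$ of Tambara ideals is the Tambara ideal generated by the levelwise products $I(G/H)J(G/H)$, $H\le G$. *)

From HB Require Import structures.
From mathcomp Require Import all_boot all_order all_algebra all_fingroup.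
From Stdlib Require List.
Set Implicit Arguments. Unset Strict Implicit. Unset Printing Implicit Defensive.
Import GRing.Theory.
Local Open Scope ring_scope.

(* Finite G-sets (G = the finite group gT).  MathComp convention: RIGHT     *)
(* actions, act (act x g) h = act x (g * h).                                *)
Record gset (gT : finGroupType) := GSet {
  gcar :> finType;
  gact : gcar -> gT -> gcar;
  gact1 : forall x, gact x 1%g = x;
  gactM : forall x g h, gact x (g * h)%g = gact (gact x g) h }.

Section GSets.
Variable gT : finGroupType.

Definition equivariant (X Y : gset gT) (f : X -> Y) :=
  forall x g, f (gact x g) = gact (f x) g.

Definition is_pullback (X Y Z P : gset gT) (f : X -> Y) (g : Z -> Y)
  (p1 : P -> X) (p2 : P -> Z) :=
  (forall u, f (p1 u) = g (p2 u)) /\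
  (forall x z, f x = g z -> exists! u, p1 u = x /\ p2 u = z).

(* Exponential diagram (Tambara):
      X <-p- A <-e- Z
      |f            |f'
      Y <----q----- Pi
   Z = X x_Y Pi (via p \o e and f'), and Pi -> Pi_f(A),
   pi |-> (q pi, section x |-> e(z_{x,pi})) is a bijection onto pairs
   (y, s) with s a section of p over the fibre f^-1(y)
   (sections encoded as partial maps X -> option A). *)
Definition is_exponential (X Y A Pi Z : gset gT) (f : X -> Y) (p : A -> X)
  (q : Pi -> Y) (f' : Z -> Pi) (e : Z -> A) :=
  (forall z, f (p (e z)) = q (f' z)) /\
  (forall x pi, f x = q pi -> exists! z, p (e z) = x /\ f' z = pi) /\
  (forall (y : Y) (s : X -> option A),
     (forall x, f x = y -> exists2 a, s x = Some a & p a = x) ->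
     exists! pi, q pi = y /\ (forall z, f' z = pi -> s (p (e z)) = Some (e z))).

Definition is_coproduct (X Y Z : gset gT) (i : X -> Z) (j : Y -> Z) :=
  injective i /\ injective j /\ (forall x y, i x <> j y) /\
  (forall z, (exists x, i x = z) \/ (exists y, j y = z)).

End GSets.

Record tambara (gT : finGroupType) := Tambara {
  tam : gset gT -> comPzRingType;
  tres : forall X Y : gset gT, (X -> Y) -> tam Y -> tam X;
  ttr  : forall X Y : gset gT, (X -> Y) -> tam X -> tam Y;
  tnm  : forall X Y : gset gT, (X -> Y) -> tam X -> tam Y;
  tres_rmorph : forall (X Y : gset gT) (f : X -> Y), equivariant f ->
    tres f 0 = 0 /\ tres f 1 = 1 /\
    (forall a b, tres f (a + b) = tres f a + tres f b) /\
    (forall a b, tres f (a * b) = tres f a * tres f b);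
  ttr_additive : forall (X Y : gset gT) (f : X -> Y), equivariant f ->
    ttr f 0 = 0 /\ (forall a b, ttr f (a + b) = ttr f a + ttr f b);
  tnm_multiplicative : forall (X Y : gset gT) (f : X -> Y), equivariant f ->
    tnm f 1 = 1 /\ (forall a b, tnm f (a * b) = tnm f a * tnm f b);
  tres_id : forall (X : gset gT) (a : tam X), tres (@id X) a = a;
  ttr_id : forall (X : gset gT) (a : tam X), ttr (@id X) a = a;
  tnm_id : forall (X : gset gT) (a : tam X), tnm (@id X) a = a;
  tres_comp : forall (X Y Z : gset gT) (f : X -> Y) (g : Y -> Z), equivariant f ->
    equivariant g -> forall a, tres (g \o f) a = tres f (tres g a);
  ttr_comp : forall (X Y Z : gset gT) (f : X -> Y) (g : Y -> Z), equivariant f ->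
    equivariant g -> forall a, ttr (g \o f) a = ttr g (ttr f a);
  tnm_comp : forall (X Y Z : gset gT) (f : X -> Y) (g : Y -> Z), equivariant f ->
    equivariant g -> forall a, tnm (g \o f) a = tnm g (tnm f a);
  (* additivity: T(empty) = 0 and T(X + Y) = T(X) x T(Y) *)
  tam_empty : forall X : gset gT, #|X| = 0%N -> (1 : tam X) = 0;
  tam_coprod : forall (X Y Z : gset gT) (i : X -> Z) (j : Y -> Z),
    equivariant i -> equivariant j -> is_coproduct i j ->
    bijective (fun u : tam Z => (tres i u, tres j u));
  ttr_pullback : forall (X Y Z P : gset gT) (f : X -> Y) (g : Z -> Y) (p1 : P -> X)
    (p2 : P -> Z), equivariant f -> equivariant g -> equivariant p1 ->
    equivariant p2 -> is_pullback f g p1 p2 ->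
    forall a, tres g (ttr f a) = ttr p2 (tres p1 a);
  tnm_pullback : forall (X Y Z P : gset gT) (f : X -> Y) (g : Z -> Y) (p1 : P -> X)
    (p2 : P -> Z), equivariant f -> equivariant g -> equivariant p1 ->
    equivariant p2 -> is_pullback f g p1 p2 ->
    forall a, tres g (tnm f a) = tnm p2 (tres p1 a);
  tdistr : forall (X Y A Pi Z : gset gT) (f : X -> Y) (p : A -> X) (q : Pi -> Y)
    (f' : Z -> Pi) (e : Z -> A), equivariant f -> equivariant p ->
    equivariant q -> equivariant f' -> equivariant e ->
    is_exponential f p q f' e ->
    forall a, tnm f (ttr p a) = ttr q (tnm f' (tres e a)) }.

Section Orbits.
Variable gT : finGroupType.
Local Open Scope group_scope.

Definition orbit_car (H : {group gT}) : finType :=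
  {C : {set gT} | C \in rcosets H [set: gT]}.

Lemma rcosets_mulr (H : {group gT}) (C : {set gT}) g :
  C \in rcosets H [set: gT] -> C :* g \in rcosets H [set: gT].
Proof.
case/rcosetsP=> x _ ->; apply/rcosetsP; exists (x * g); first by rewrite inE.
by rewrite rcosetM.
Qed.

Lemma rcosets_mem (H : {group gT}) x : H :* x \in rcosets H [set: gT].
Proof. by apply/rcosetsP; exists x; rewrite ?inE. Qed.

Definition orbit_act (H : {group gT}) (C : orbit_car H) (g : gT) : orbit_car H :=
  exist _ (val C :* g) (rcosets_mulr g (valP C)).

Lemma orbit_act1 H (C : orbit_car H) : orbit_act C 1 = C.
Proof. by apply: val_inj; rewrite /= rcoset1. Qed.

Lemma orbit_actM H (C : orbit_car H) g h :
  orbit_act C (g * h) = orbit_act (orbit_act C g) h.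
Proof. by apply: val_inj; rewrite /= rcosetM. Qed.

(* the transitive G-set G/H (realised as right cosets H\G) *)
Definition orbit (H : {group gT}) : gset gT :=
  @GSet gT (orbit_car H) (@orbit_act H) (@orbit_act1 H) (@orbit_actM H).

(* projection G/H -> G/K  (Hx |-> Kx), equivariant when H \subset K *)
Definition oproj (H K : {group gT}) (C : orbit H) : orbit K :=
  exist _ (K :* repr (val C)) (rcosets_mem K (repr (val C))).

(* conjugation G/H -> G/(H^g)  (Hx |-> g^-1 H x = H^g (g^-1 x)) *)
Definition oconj (H : {group gT}) (g : gT) (C : orbit H) : orbit (H :^ g)%G :=
  exist _ ((H :^ g) :* (g^-1 * repr (val C)))
        (rcosets_mem (H :^ g)%G (g^-1 * repr (val C))).

End Orbits.

Section Ideals.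
Variables (gT : finGroupType) (T : tambara gT).

Notation TG H := (tam T (orbit H)).

Definition ring_ideal (R : comPzRingType) (P : R -> Prop) :=
  P 0 /\ (forall a b, P a -> P b -> P (a + b)) /\
  (forall r a, P a -> P (r * a)).

Definition tfamily := forall H : {group gT}, TG H -> Prop.

Definition is_tideal (I : tfamily) :=
  (forall H, ring_ideal (I H)) /\
  (forall (H K : {group gT}), (H \subset K)%g ->
     forall a, I K a -> I H (tres (@oproj gT H K) a)) /\
  (forall (H K : {group gT}), (H \subset K)%g ->
     forall a, I H a -> I K (ttr (@oproj gT H K) a)) /\
  (forall (H K : {group gT}), (H \subset K)%g ->
     forall a, I H a -> I K (tnm (@oproj gT H K) a)) /\
  (* conjugation c_g : T(G/H) -> T(G/H^g) *)
  (forall (H : {group gT}) (g : gT),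
     forall a, I H a -> I (H :^ g)%G (ttr (@oconj gT H g) a)).

Definition tgen (S : tfamily) : tfamily := fun H x =>
  forall J, is_tideal J -> (forall K y, S K y -> J K y) -> J H x.

Arguments tgen : clear implicits.
Arguments tgen S H x : clear implicits.

Definition tfin_gen (I : tfamily) :=
  exists s : seq {H : {group gT} & TG H},
    forall H x, I H x <->
      tgen (fun K y => Stdlib.Lists.List.In (existT (fun K => TG K) K y) s) H x.

Definition tprod (I J : tfamily) : tfamily :=
  tgen (fun H y => exists a b, I H a /\ J H b /\ y = a * b).

End Ideals.
Arguments tgen {gT T} S H x.
Arguments tprod {gT T} I J H _.
Arguments tfamily {gT} T.

(* Let B be the family of restrictions, along maps of orbits, of a finite list
   of generators.  Every element of the Tambara ideal they generate has the
   normal form tr_w (r * nm_v g), with v surjective and every restriction of g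
   to an orbit in B: these elements form a Tambara ideal, by the projection
   formula for products and the distributive law for norms.  By the projection
   formula and Beck-Chevalley, a product of two normal forms is
   tr_w (r * nm_v1 g1 * nm_v2 g2).  An element tr_w c lies in a Tambara ideal
   as soon as all restrictions of c to orbits do, and over an orbit G/S the norm
   along a surjection splits off a factor nm_phi (res_psi x), with phi, psi maps
   of orbits and x a generator.  Hence IJ is generated by the finitely many
   products nm_phi1 (res_psi1 x1) * nm_phi2 (res_psi2 x2) of such factors for
   generators x1 of I and x2 of J; conversely these lie in IJ, since Tambara
   ideals are closed under norms and restrictions along all maps of orbits. *)

From mathcomp Require Import all_boot all_order all_algebra all_fingroup.
From mathcomp Require Import ring.
From Stdlib Require Import FunctionalExtensionality.
Set Implicit Arguments. Unset Strict Implicit. Unset Printing Implicit Defensive.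
Import GRing.Theory.
Local Open Scope ring_scope.

Definition surjective (A B : Type) (f : A -> B) := forall y, exists x, f x = y.

Section GSets.
Variable gT : finGroupType.

Lemma gactK (X : gset gT) (x : X) g : gact (gact x g) g^-1 = x.
Proof. by rewrite -gactM mulgV gact1. Qed.

Lemma gactVK (X : gset gT) (x : X) g : gact (gact x g^-1) g = x.
Proof. by rewrite -gactM mulVg gact1. Qed.

Lemma equivariant_id (X : gset gT) : equivariant (@id X).
Proof. by []. Qed.

Lemma equivariant_comp (X Y Z : gset gT) (f : X -> Y) (g : Y -> Z) :
  equivariant f -> equivariant g -> equivariant (g \o f).
Proof. by move=> ef eg x h; rewrite /= ef eg. Qed.

Definition gset0 : gset gT :=
  @GSet gT (void : finType) (fun x _ => x) (fun _ => erefl) (fun _ _ _ => erefl).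

Definition gset0_map (X : gset gT) : gset0 -> X := fun v => match v with end.

Lemma gset0_map_equivariant (X : gset gT) : equivariant (gset0_map X).
Proof. by case. Qed.

Lemma card_gset0 : #|gset0| = 0%N.
Proof. exact: card_void. Qed.

Lemma is_coproductC (X Y Z : gset gT) (i : X -> Z) (j : Y -> Z) :
  is_coproduct i j -> is_coproduct j i.
Proof.
case=> ii [ij [d c]]; do 3!split=> //; first by move=> y x /esym/d.
by move=> z; case: (c z); [right|left].
Qed.

End GSets.

Arguments equivariant_id {gT X}.
Arguments gset0 {gT}.
Arguments card_gset0 {gT}.
Arguments gset0_map {gT} X.
Arguments gset0_map_equivariant {gT} X.

Section GSetConstructions.
Variable gT : finGroupType.

Section Pullback.
Variables (X Y Z : gset gT) (f : X -> Y) (g : Z -> Y).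
Hypotheses (ef : equivariant f) (eg : equivariant g).

Definition pullback_car : finType := {u : X * Z | f u.1 == g u.2}.

Lemma pullback_act_subproof (u : pullback_car) h :
  f (gact (val u).1 h) == g (gact (val u).2 h).
Proof. by rewrite ef eg (eqP (valP u)). Qed.

Definition pullback_act (u : pullback_car) h : pullback_car :=
  exist _ (gact (val u).1 h, gact (val u).2 h) (pullback_act_subproof u h).

Lemma pullback_act1 u : pullback_act u 1%g = u.
Proof. by apply: val_inj; rewrite /= !gact1 -surjective_pairing. Qed.

Lemma pullback_actM u a b : pullback_act u (a * b)%g = pullback_act (pullback_act u a) b.
Proof. by apply: val_inj; rewrite /= !gactM. Qed.

Definition pullback_gset : gset gT :=
  @GSet gT pullback_car pullback_act pullback_act1 pullback_actM.

Definition pb1 (u : pullback_gset) : X := (val u).1.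
Definition pb2 (u : pullback_gset) : Z := (val u).2.

Lemma pb1_equivariant : equivariant pb1. Proof. by []. Qed.
Lemma pb2_equivariant : equivariant pb2. Proof. by []. Qed.

Lemma pullback_gset_is_pullback : is_pullback f g pb1 pb2.
Proof.
split=> [u|x z fxgz]; first exact: (eqP (valP u)).
have xz_ok : f (x, z).1 == g (x, z).2 by apply/eqP.
exists (exist _ (x, z) xz_ok); split=> // u [ux uz].
by apply: val_inj; rewrite /= -ux -uz -surjective_pairing.
Qed.

Lemma pb2_surjective : surjective f -> surjective pb2.
Proof.
move=> sf z; case: (sf (g z)) => x fx.
have xz_ok : f (x, z).1 == g (x, z).2 by apply/eqP.
by exists (exist _ (x, z) xz_ok).
Qed.

End Pullback.

Section Sum.
Variables (X Y : gset gT).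

Definition sum_act (u : X + Y) h : X + Y :=
  match u with inl x => inl (gact x h) | inr y => inr (gact y h) end.

Lemma sum_act1 u : sum_act u 1%g = u.
Proof. by case: u => x /=; rewrite gact1. Qed.

Lemma sum_actM u a b : sum_act u (a * b)%g = sum_act (sum_act u a) b.
Proof. by case: u => x /=; rewrite gactM. Qed.

Definition sum_gset : gset gT := @GSet gT (X + Y)%type sum_act sum_act1 sum_actM.

Definition sinl (x : X) : sum_gset := inl x.
Definition sinr (y : Y) : sum_gset := inr y.

Lemma sinl_equivariant : equivariant sinl. Proof. by []. Qed.
Lemma sinr_equivariant : equivariant sinr. Proof. by []. Qed.

Lemma sum_gset_is_coproduct : is_coproduct sinl sinr.
Proof.
split; first by move=> ? ? [].
split; first by move=> ? ? [].
by split=> [//|[x|y]]; [left; exists x|right; exists y].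
Qed.

End Sum.

Section SumMaps.
Variables (V1 V2 W1 W2 : gset gT) (v1 : V1 -> W1) (v2 : V2 -> W2).

Definition sum_map (u : sum_gset V1 V2) : sum_gset W1 W2 :=
  match u with inl x => inl (v1 x) | inr y => inr (v2 y) end.

Lemma sum_map_equivariant :
  equivariant v1 -> equivariant v2 -> equivariant sum_map.
Proof. by move=> e1 e2 [x|y] h /=; rewrite ?e1 ?e2. Qed.

Lemma sum_map_surjective : surjective v1 -> surjective v2 -> surjective sum_map.
Proof.
move=> s1 s2 [x|y]; first by case: (s1 x) => u <-; exists (inl u).
by case: (s2 y) => u <-; exists (inr u).
Qed.

Lemma sum_map_pullback_sinl : is_pullback sum_map (@sinl _ W2) (@sinl _ V2) v1.
Proof. by split=> // -[x|y] // z [<-]; exists x; split=> // u [[]]. Qed.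

Lemma sum_map_pullback_sinr : is_pullback sum_map (@sinr W1 _) (@sinr V1 _) v2.
Proof. by split=> // -[x|y] // z [<-]; exists y; split=> // u [[]]. Qed.

End SumMaps.

Section SumCase.
Variables (X1 X2 Y : gset gT) (w1 : X1 -> Y) (w2 : X2 -> Y).

Definition sum_case (u : sum_gset X1 X2) : Y :=
  match u with inl x => w1 x | inr y => w2 y end.

Lemma sum_case_equivariant :
  equivariant w1 -> equivariant w2 -> equivariant sum_case.
Proof. by move=> e1 e2 [x|y] h /=; rewrite ?e1 ?e2. Qed.

End SumCase.

End GSetConstructions.

Arguments pb1 {gT X Y Z f g} ef eg.
Arguments pb2 {gT X Y Z f g} ef eg.
Arguments pb1_equivariant {gT X Y Z f g} ef eg.
Arguments pb2_equivariant {gT X Y Z f g} ef eg.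
Arguments pullback_gset_is_pullback {gT X Y Z f g} ef eg.
Arguments pb2_surjective {gT X Y Z f g} ef eg.
Arguments sinl {gT X Y}.
Arguments sinr {gT X Y}.
Arguments sinl_equivariant {gT X Y}.
Arguments sinr_equivariant {gT X Y}.
Arguments sum_gset_is_coproduct {gT X Y}.

Section DependentProduct.
Variables (gT : finGroupType) (X Y A : gset gT) (f : X -> Y) (p : A -> X).
Hypotheses (ef : equivariant f) (ep : equivariant p).

(* [u = (y, s)] with [s] a section of [p] over the fibre [f^-1(y)], encoded as a
   partial map that is [None] off that fibre. *)
Definition is_fibre_section (u : Y * {ffun X -> option A}) :=
  [forall x, if f x == u.1 then (if u.2 x is Some a then p a == x else false)
             else u.2 x == None].

Definition dprod_car : finType := {u : Y * {ffun X -> option A} | is_fibre_section u}.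

Definition section_act (s : {ffun X -> option A}) g : {ffun X -> option A} :=
  [ffun x => omap (fun a => gact a g) (s (gact x g^-1))].

Lemma is_fibre_sectionP (u : dprod_car) x :
  if f x == (val u).1 then (if (val u).2 x is Some a then p a == x else false)
  else (val u).2 x == None.
Proof. exact: (forallP (valP u) x). Qed.

Lemma dprod_act_subproof (u : dprod_car) g :
  is_fibre_section (gact (val u).1 g, section_act (val u).2 g).
Proof.
apply/forallP => x /=; rewrite ffunE.
have := is_fibre_sectionP u (gact x g^-1); rewrite ef.
have -> : (gact (f x) g^-1 == (val u).1) = (f x == gact (val u).1 g).
  by apply/eqP/eqP=> [<-|->]; rewrite ?gactVK ?gactK.
case: (f x == _); last by move/eqP ->.
by case: ((val u).2 _) => //= a /eqP pa; rewrite ep pa gactVK.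
Qed.

Definition dprod_act (u : dprod_car) g : dprod_car :=
  exist _ (gact (val u).1 g, section_act (val u).2 g) (dprod_act_subproof u g).

Lemma dprod_act1 u : dprod_act u 1%g = u.
Proof.
apply: val_inj; case: u => [[y s] _] /=; rewrite gact1; congr (_, _).
by apply/ffunP=> x; rewrite ffunE invg1 gact1; case: (s x) => //= a; rewrite gact1.
Qed.

Lemma dprod_actM u a b : dprod_act u (a * b)%g = dprod_act (dprod_act u a) b.
Proof.
apply: val_inj; case: u => [[y s] _] /=; rewrite gactM; congr (_, _).
by apply/ffunP=> x; rewrite !ffunE invMg gactM; case: (s _) => //= c; rewrite gactM.
Qed.

Definition dprod_gset : gset gT := @GSet gT dprod_car dprod_act dprod_act1 dprod_actM.

Definition dprod_proj (u : dprod_gset) : Y := (val u).1.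

Lemma dprod_proj_equivariant : equivariant dprod_proj. Proof. by []. Qed.

Lemma dprod_sectionP (u : dprod_gset) x :
  f x = dprod_proj u -> exists2 a, (val u).2 x = Some a & p a = x.
Proof.
move=> fx; have := is_fibre_sectionP u x; rewrite fx eqxx.
by case: ((val u).2 x) => // a /eqP; exists a.
Qed.

Definition dprod_eval_car : finType :=
  {u : A * dprod_gset | (val u.2).2 (p u.1) == Some u.1}.

Lemma dprod_eval_act_subproof (u : dprod_eval_car) g :
  (val (gact (val u).2 g)).2 (p (gact (val u).1 g)) == Some (gact (val u).1 g).
Proof. by rewrite /= ffunE ep gactK (eqP (valP u)). Qed.

Definition dprod_eval_act (u : dprod_eval_car) g : dprod_eval_car :=
  exist _ (gact (val u).1 g, gact (val u).2 g) (dprod_eval_act_subproof u g).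

Lemma dprod_eval_act1 u : dprod_eval_act u 1%g = u.
Proof.
apply: val_inj; case: u => [[a w] _] /=; rewrite gact1; congr (_, _).
exact: dprod_act1.
Qed.

Lemma dprod_eval_actM u a b :
  dprod_eval_act u (a * b)%g = dprod_eval_act (dprod_eval_act u a) b.
Proof. by apply: val_inj; rewrite /= gactM; congr (_, _); apply: dprod_actM. Qed.

Definition dprod_eval_gset : gset gT :=
  @GSet gT dprod_eval_car dprod_eval_act dprod_eval_act1 dprod_eval_actM.

Definition dprod_eval_proj (z : dprod_eval_gset) : dprod_gset := (val z).2.
Definition dprod_eval (z : dprod_eval_gset) : A := (val z).1.

Lemma dprod_eval_proj_equivariant : equivariant dprod_eval_proj. Proof. by []. Qed.
Lemma dprod_eval_equivariant : equivariant dprod_eval. Proof. by []. Qed.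

Lemma dprod_evalP (z : dprod_eval_gset) :
  (val (dprod_eval_proj z)).2 (p (dprod_eval z)) = Some (dprod_eval z).
Proof. exact: (eqP (valP z)). Qed.

Lemma dprod_eval_at (u : dprod_gset) a :
  (val u).2 (p a) = Some a -> {z | dprod_eval z = a /\ dprod_eval_proj z = u}.
Proof.
move=> ua; have ok : (val (a, u).2).2 (p (a, u).1) == Some (a, u).1 by apply/eqP.
by exists (exist _ (a, u) ok).
Qed.

Lemma dprod_square z : f (p (dprod_eval z)) = dprod_proj (dprod_eval_proj z).
Proof.
have := is_fibre_sectionP (dprod_eval_proj z) (p (dprod_eval z)).
by rewrite dprod_evalP; case: eqP.
Qed.

Lemma dprod_eval_unique x u :
  f x = dprod_proj u -> exists! z, p (dprod_eval z) = x /\ dprod_eval_proj z = u.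
Proof.
case/dprod_sectionP=> a ua pa; rewrite -pa in ua.
case: (dprod_eval_at ua) => z [za zu].
exists z; split=> [|z' [pz' z'u]]; first by rewrite za pa.
have z'a : dprod_eval z' = a.
  by have := dprod_evalP z'; rewrite z'u pz' -pa ua => -[].
apply: val_inj; apply: injective_projections.
  exact: etrans za (esym z'a).
exact: etrans zu (esym z'u).
Qed.

Lemma dprod_universal y (s : X -> option A) :
  (forall x, f x = y -> exists2 a, s x = Some a & p a = x) ->
  exists! u, dprod_proj u = y /\
    (forall z, dprod_eval_proj z = u -> s (p (dprod_eval z)) = Some (dprod_eval z)).
Proof.
move=> hs; pose s0 := [ffun x => if f x == y then s x else None].
have s0_ok : is_fibre_section (y, s0).
  by apply/forallP=> x /=; rewrite ffunE; case: eqP => // /hs [a -> /eqP].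
exists (exist _ (y, s0) s0_ok); split.
  split=> // z zu; have := dprod_evalP z.
  by rewrite zu /= ffunE; case: (f _ == y).
move=> [[y' s'] s'_ok] [y'y hs']; rewrite /dprod_proj /= in y'y; subst y'.
apply: val_inj; congr (_, _).
apply/ffunP=> x; rewrite ffunE; have := forallP s'_ok x; rewrite /=.
case: eqP => [fx|_ /eqP //]; case E: (s' x) => [a|] // /eqP pa.
pose u : dprod_gset := exist _ (y, s') s'_ok.
case: (@dprod_eval_at u a); first by rewrite /= pa.
by move=> z [za zu]; have := hs' z zu; rewrite za pa.
Qed.

Lemma dprod_is_exponential :
  is_exponential f p dprod_proj dprod_eval_proj dprod_eval.
Proof.
split; [exact: dprod_square | split; [exact: dprod_eval_unique | exact: dprod_universal]].
Qed.

Lemma dprod_eval_proj_surjective : surjective f -> surjective dprod_eval_proj.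
Proof.
move=> sf u; case: (sf (dprod_proj u)) => x /dprod_sectionP [a ua pa].
rewrite -pa in ua.
by case: (dprod_eval_at ua) => z [_ zu]; exists z.
Qed.

End DependentProduct.

Arguments dprod_proj {gT X Y A f p} ef ep.
Arguments dprod_eval_proj {gT X Y A f p} ef ep.
Arguments dprod_eval {gT X Y A f p} ef ep.
Arguments dprod_proj_equivariant {gT X Y A f p} ef ep.
Arguments dprod_eval_proj_equivariant {gT X Y A f p} ef ep.
Arguments dprod_eval_equivariant {gT X Y A f p} ef ep.
Arguments dprod_is_exponential {gT X Y A f p} ef ep.
Arguments dprod_eval_proj_surjective {gT X Y A f p} ef ep.

Section Orbits.
Variable gT : finGroupType.
Local Open Scope group_scope.

Definition orbit_base (S : {group gT}) : orbit S := exist _ (S :* 1) (rcosets_mem S 1).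

Lemma orbit_val (S : {group gT}) (C : orbit S) : exists x, val C = S :* x.
Proof. by case/rcosetsP: (valP C) => x _ ->; exists x. Qed.

Lemma orbit_base_act (S : {group gT}) (C : orbit S) :
  C = gact (orbit_base S) (repr (val C)).
Proof.
by apply: val_inj; case: (orbit_val C) => x e; rewrite /= rcoset1 e rcoset_repr.
Qed.

Lemma orbit_map_act (S : {group gT}) (X : gset gT) (phi : orbit S -> X) :
  equivariant phi -> forall C, phi C = gact (phi (orbit_base S)) (repr (val C)).
Proof. by move=> ephi C; rewrite -ephi -orbit_base_act. Qed.

Lemma eq_orbit_map (S : {group gT}) (X : gset gT) (phi psi : orbit S -> X) :
  equivariant phi -> equivariant psi ->
  phi (orbit_base S) = psi (orbit_base S) -> phi =1 psi.
Proof. by move=> ephi epsi e C; rewrite (orbit_map_act ephi) (orbit_map_act epsi) e. Qed.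

Lemma orbit_map_sum (S : {group gT}) (V1 V2 : gset gT) (phi : orbit S -> sum_gset V1 V2) :
  equivariant phi ->
  (exists2 phi1 : orbit S -> V1, equivariant phi1 & phi =1 sinl \o phi1) \/
  (exists2 phi2 : orbit S -> V2, equivariant phi2 & phi =1 sinr \o phi2).
Proof.
move=> ephi; have phiE := orbit_map_act ephi.
case E: (phi (orbit_base S)) => [v|v]; [left|right].
all: exists (fun C => gact v (repr (val C))) => [C g|C]; last by rewrite phiE E.
all: by have := ephi C g; rewrite (phiE (gact C g)) (phiE C) E => -[].
Qed.

Lemma rcoset_mulgV (H : {group gT}) (z y y' : gT) :
  y \in H :* z -> y' \in H :* z -> y' * y^-1 \in H.
Proof.
rewrite !mem_rcoset => hy hy'.
by have := groupM hy' (groupVr hy); rewrite invMg invgK mulgA mulgKV.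
Qed.

Lemma mem_repr_orbit (H : {group gT}) (C : orbit H) : repr (val C) \in val C.
Proof. by case: (orbit_val C) => x ->; exact: mem_repr_rcoset. Qed.

Lemma mem_orbit_base (H : {group gT}) : 1 \in val (orbit_base H).
Proof. exact: rcoset_refl. Qed.

Lemma mem_orbit_act (H : {group gT}) (C : orbit H) y g :
  y \in val C -> y * g \in val (gact C g).
Proof. by rewrite /= mem_rcoset mulgK. Qed.

Lemma oproj_val (H K : {group gT}) (C : orbit H) y :
  H \subset K -> y \in val C -> val (oproj K C) = K :* y.
Proof.
move=> sHK; case: (orbit_val C) => x e; rewrite e => hy /=.
have hr : repr (val C) \in H :* x by rewrite -e mem_repr_orbit.
have /subsetP sHxKx := rcosetS x H K; rewrite sHK in sHxKx.
by rewrite (rcoset_eqP (sHxKx _ hr)) (rcoset_eqP (sHxKx _ hy)).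
Qed.

Lemma oproj_equivariant (H K : {group gT}) :
  H \subset K -> equivariant (@oproj gT H K).
Proof.
move=> sHK C g; apply: val_inj.
by rewrite (oproj_val sHK (mem_orbit_act g (mem_repr_orbit C))) /= rcosetM.
Qed.

Lemma oproj_surjective (H K : {group gT}) : H \subset K -> surjective (@oproj gT H K).
Proof.
move=> sHK D; case: (orbit_val D) => x e.
exists (exist _ (H :* x) (rcosets_mem H x)); apply: val_inj.
by rewrite e (oproj_val (y := x) sHK) //= rcoset_refl.
Qed.

Lemma oconj_val (H : {group gT}) g (C : orbit H) y :
  y \in val C -> val (oconj g C) = (H :^ g) :* (g^-1 * y).
Proof.
case: (orbit_val C) => x e; rewrite e => hy /=.
have hr : repr (val C) \in H :* x by rewrite -e mem_repr_orbit.
apply/rcoset_eqP; rewrite mem_rcoset invMg invgK mulgA.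
rewrite -[_ * _ * g](mulgA _ _ g) -(mulgA (g^-1)).
by have := rcoset_mulgV hy hr; rewrite -(memJ_conjg _ g) /conjg !mulgA.
Qed.

Lemma oconj_equivariant (H : {group gT}) g : equivariant (@oconj gT H g).
Proof.
move=> C h; apply: val_inj.
by rewrite (oconj_val g (mem_orbit_act h (mem_repr_orbit C))) /= -rcosetM mulgA.
Qed.

End Orbits.

Section OrbitDecomposition.
Variables (gT : finGroupType) (W : gset gT) (u : W).
Local Open Scope group_scope.

Definition in_gorbit (x : W) := [exists g, x == gact u g].

Definition orbitC_car : finType := {x : W | ~~ in_gorbit x}.

Lemma orbitC_act_subproof (x : orbitC_car) g : ~~ in_gorbit (gact (val x) g).
Proof.
apply/negP=> /existsP [h /eqP e]; case/negP: (valP x); apply/existsP.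
by exists (h * g^-1); rewrite gactM -e gactK.
Qed.

Definition orbitC_act (x : orbitC_car) g : orbitC_car :=
  exist _ (gact (val x) g) (orbitC_act_subproof x g).

Lemma orbitC_act1 x : orbitC_act x 1 = x.
Proof. by apply: val_inj; rewrite /= gact1. Qed.

Lemma orbitC_actM x a b : orbitC_act x (a * b) = orbitC_act (orbitC_act x a) b.
Proof. by apply: val_inj; rewrite /= gactM. Qed.

Definition orbitC_gset : gset gT :=
  @GSet gT orbitC_car orbitC_act orbitC_act1 orbitC_actM.

Definition orbitC_incl (x : orbitC_gset) : W := val x.

Lemma orbitC_incl_equivariant : equivariant orbitC_incl. Proof. by []. Qed.

Lemma card_orbitC : (#|orbitC_gset| < #|W|)%N.
Proof.
rewrite /= card_sig -(cardC in_gorbit) -[X in (X < _)%N]add0n ltn_add2r.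
by apply/card_gt0P; exists u; apply/existsP; exists 1; rewrite gact1.
Qed.

Lemma gstab_group_set : group_set [set g : gT | gact u g == u].
Proof.
apply/group_setP; split=> [|x y]; first by rewrite inE gact1.
by rewrite !inE => /eqP ux /eqP uy; rewrite gactM ux uy.
Qed.

Definition gstab : {group gT} := Group gstab_group_set.

Lemma gact_gstab (y y' : gT) : y' * y^-1 \in gstab -> gact u y' = gact u y.
Proof. by rewrite inE => /eqP e; rewrite -{1}(mulgKV y y') gactM e. Qed.

Definition orbit_incl (C : orbit gstab) : W := gact u (repr (val C)).

Lemma orbit_incl_equivariant : equivariant orbit_incl.
Proof.
move=> C g; rewrite /orbit_incl -gactM; apply: gact_gstab.
case: (orbit_val C) => x e.
have h1 := mem_orbit_act g (mem_repr_orbit C).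
have h2 := mem_repr_orbit (gact C g).
rewrite /= e -rcosetM in h1 h2.
by have := rcoset_mulgV h1 h2; rewrite /= e rcosetM.
Qed.

Lemma orbit_incl_inj : injective orbit_incl.
Proof.
move=> C D e; apply: val_inj.
case: (orbit_val C) => x ex; case: (orbit_val D) => y ey.
have hC := mem_repr_orbit C; have hD := mem_repr_orbit D.
rewrite ex in hC; rewrite ey in hD; rewrite /orbit_incl ex ey in e *.
rewrite -(rcoset_eqP hC) -(rcoset_eqP hD); apply/rcoset_eqP.
by rewrite mem_rcoset inE gactM e gactK.
Qed.

Lemma orbit_orbitC_coproduct : is_coproduct orbit_incl orbitC_incl.
Proof.
split; first exact: orbit_incl_inj.
split; first exact: val_inj.
split=> [C x e|z].
  have := valP x; rewrite -/(orbitC_incl x) -e /orbit_incl.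
  by move/negP; apply; apply/existsP; exists (repr (val C)).
case uz: (in_gorbit z).
  left; case/existsP: uz => g /eqP ->.
  exists (exist _ (gstab :* g) (rcosets_mem gstab g)); rewrite /orbit_incl /=.
  by apply: gact_gstab; apply: rcoset_mulgV (rcoset_refl _ _) (mem_repr_rcoset _ _).
right; have z_ok : ~~ in_gorbit z by rewrite uz.
by exists (exist _ z z_ok).
Qed.

End OrbitDecomposition.

Arguments orbit_incl {gT W} u.
Arguments orbitC_incl {gT W} u.
Arguments orbit_incl_equivariant {gT W} u.
Arguments orbitC_incl_equivariant {gT W} u.
Arguments orbit_orbitC_coproduct {gT W} u.

Section TambaraTheory.
Variables (gT : finGroupType) (T : tambara gT).

Lemma eq_tres (X Y : gset gT) (f g : X -> Y) : f =1 g -> tres (t:=T) f = tres g.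
Proof. by move=> /functional_extensionality ->. Qed.

Lemma eq_ttr (X Y : gset gT) (f g : X -> Y) : f =1 g -> ttr (t:=T) f = ttr g.
Proof. by move=> /functional_extensionality ->. Qed.

Lemma eq_tnm (X Y : gset gT) (f g : X -> Y) : f =1 g -> tnm (t:=T) f = tnm g.
Proof. by move=> /functional_extensionality ->. Qed.

Section EquivariantMap.
Variables (X Y : gset gT) (f : X -> Y).
Hypothesis ef : equivariant f.

Lemma tresD a b : tres (t:=T) f (a + b) = tres f a + tres f b.
Proof. by case: (tres_rmorph T ef) => _ [] _ []. Qed.
Lemma tresM a b : tres (t:=T) f (a * b) = tres f a * tres f b.
Proof. by case: (tres_rmorph T ef) => _ [] _ []. Qed.
Lemma ttr0 : ttr (t:=T) f 0 = 0. Proof. by case: (ttr_additive T ef). Qed.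
Lemma ttrD a b : ttr (t:=T) f (a + b) = ttr f a + ttr f b.
Proof. by case: (ttr_additive T ef). Qed.
Lemma tnm1 : tnm (t:=T) f 1 = 1. Proof. by case: (tnm_multiplicative T ef). Qed.
Lemma tnmM a b : tnm (t:=T) f (a * b) = tnm f a * tnm f b.
Proof. by case: (tnm_multiplicative T ef). Qed.

End EquivariantMap.

Lemma tam_card0_eq0 (X : gset gT) : #|X| = 0%N -> forall a : tam T X, a = 0.
Proof. by move=> /(tam_empty T) e a; rewrite -[a]mulr1 e mulr0. Qed.

Lemma ttr_gset0 (X : gset gT) (a : tam T gset0) : ttr (gset0_map X) a = 0.
Proof. by rewrite (tam_card0_eq0 card_gset0 a) (ttr0 (gset0_map_equivariant X)). Qed.

Lemma tnm_gset0 (X : gset gT) (a : tam T gset0) : tnm (gset0_map X) a = 1.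
Proof.
have -> : a = 1 by rewrite (tam_card0_eq0 card_gset0 a) (tam_card0_eq0 card_gset0 1).
exact: (tnm1 (gset0_map_equivariant X)).
Qed.

Section Isomorphism.
Variables (X Y : gset gT) (psi : X -> Y) (chi : Y -> X).
Hypotheses (epsi : equivariant psi) (echi : equivariant chi).
Hypotheses (psiK : cancel psi chi) (chiK : cancel chi psi).

Lemma iso_is_pullback : is_pullback psi (@id Y) chi (@id Y).
Proof.
split=> [u|x z e]; first by rewrite /= chiK.
by exists z; split=> [|u []//]; rewrite -e psiK.
Qed.

Lemma ttr_iso a : ttr (t:=T) psi a = tres chi a.
Proof.
have := ttr_pullback epsi equivariant_id echi equivariant_id iso_is_pullback a.
by rewrite tres_id ttr_id.
Qed.

Lemma tnm_iso a : tnm (t:=T) psi a = tres chi a.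
Proof.
have := tnm_pullback epsi equivariant_id echi equivariant_id iso_is_pullback a.
by rewrite tres_id tnm_id.
Qed.

End Isomorphism.

Section Coproduct.
Variables (X Y Z : gset gT) (i : X -> Z) (j : Y -> Z).
Hypotheses (ei : equivariant i) (ej : equivariant j) (cp : is_coproduct i j).

Lemma coproduct_self_pullback : is_pullback i i (@id X) (@id X).
Proof. by case: cp => ii _; split=> // x z /ii ->; exists z; split=> [|u []]. Qed.

Lemma coproduct_disjoint_pullback : is_pullback i j (gset0_map X) (gset0_map Y).
Proof. by case: cp => _ [_ [d _]]; split=> [[]|x z /d []]. Qed.

Lemma tres_ttr_self a : tres (t:=T) i (ttr i a) = a.
Proof.
have := ttr_pullback ei ei equivariant_id equivariant_id
  coproduct_self_pullback a.
by rewrite tres_id ttr_id.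
Qed.

Lemma tres_tnm_self a : tres (t:=T) i (tnm i a) = a.
Proof.
have := tnm_pullback ei ei equivariant_id equivariant_id
  coproduct_self_pullback a.
by rewrite tres_id tnm_id.
Qed.

Lemma tres_ttr_disjoint a : tres (t:=T) j (ttr i a) = 0.
Proof.
by rewrite (ttr_pullback ei ej (gset0_map_equivariant _) (gset0_map_equivariant _)
  coproduct_disjoint_pullback a) ttr_gset0.
Qed.

Lemma tres_tnm_disjoint a : tres (t:=T) j (tnm i a) = 1.
Proof.
by rewrite (tnm_pullback ei ej (gset0_map_equivariant _) (gset0_map_equivariant _)
  coproduct_disjoint_pullback a) tnm_gset0.
Qed.

End Coproduct.

Section CoproductDecomposition.
Variables (X Y Z : gset gT) (i : X -> Z) (j : Y -> Z).
Hypotheses (ei : equivariant i) (ej : equivariant j) (cp : is_coproduct i j).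

Let cpC := is_coproductC cp.

Lemma coproduct_tres_inj (u v : tam T Z) :
  tres i u = tres i v -> tres j u = tres j v -> u = v.
Proof.
move=> eqi eqj; case: (tam_coprod T ei ej cp) => h resK _.
by rewrite -(resK u) -(resK v) /= eqi eqj.
Qed.

Lemma coproduct_ttr_decomp (c : tam T Z) : c = ttr i (tres i c) + ttr j (tres j c).
Proof.
apply: coproduct_tres_inj.
  by rewrite (tresD ei) (tres_ttr_self ei cp) (tres_ttr_disjoint ej ei cpC) addr0.
by rewrite (tresD ej) (tres_ttr_self ej cpC) (tres_ttr_disjoint ei ej cp) add0r.
Qed.

Lemma coproduct_tnm_decomp (c : tam T Z) : c = tnm i (tres i c) * tnm j (tres j c).
Proof.
apply: coproduct_tres_inj.
  by rewrite (tresM ei) (tres_tnm_self ei cp) (tres_tnm_disjoint ej ei cpC) mulr1.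
by rewrite (tresM ej) (tres_tnm_self ej cpC) (tres_tnm_disjoint ei ej cp) mul1r.
Qed.

Lemma ttr_coproduct (W : gset gT) (w : Z -> W) (c : tam T Z) : equivariant w ->
  ttr w c = ttr (w \o i) (tres i c) + ttr (w \o j) (tres j c).
Proof.
move=> ew; rewrite {1}(coproduct_ttr_decomp c) (ttrD ew).
by rewrite -(ttr_comp ei ew) -(ttr_comp ej ew).
Qed.

Lemma tnm_coproduct (W : gset gT) (w : Z -> W) (c : tam T Z) : equivariant w ->
  tnm w c = tnm (w \o i) (tres i c) * tnm (w \o j) (tres j c).
Proof.
move=> ew; rewrite {1}(coproduct_tnm_decomp c) (tnmM ew).
by rewrite -(tnm_comp ei ew) -(tnm_comp ej ew).
Qed.

End CoproductDecomposition.

Lemma tam_sum_glue (X Y : gset gT) (c1 : tam T X) (c2 : tam T Y) :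
  exists c : tam T (sum_gset X Y), tres sinl c = c1 /\ tres sinr c = c2.
Proof.
case: (tam_coprod T (@sinl_equivariant _ X Y) sinr_equivariant sum_gset_is_coproduct)
  => glue _ glueK.
by exists (glue (c1, c2)); case: (glueK (c1, c2)).
Qed.

End TambaraTheory.

Section ProjectionFormula.
Variables (gT : finGroupType) (T : tambara gT).

Definition codiag (X : gset gT) : sum_gset X X -> X := sum_case id id.

Lemma codiag_equivariant (X : gset gT) : equivariant (@codiag X).
Proof. exact: sum_case_equivariant. Qed.

Lemma tnm_codiag (X : gset gT) (c : tam T (sum_gset X X)) :
  tnm (@codiag X) c = tres sinl c * tres sinr c.
Proof.
by rewrite (tnm_coproduct sinl_equivariant sinr_equivariant sum_gset_is_coproduct
  _ (@codiag_equivariant X)) !tnm_id.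
Qed.

Section Frobenius.
Variables (X Y : gset gT) (f : X -> Y).
Hypothesis ef : equivariant f.

Let frob_p : sum_gset X Y -> sum_gset Y Y := sum_map f id.
Let frob_e : sum_gset X X -> sum_gset X Y := sum_map id f.

(* The distributive law for this exponential diagram, applied to the element
   (a, b) of T(X + Y), is the projection formula. *)
Lemma codiag_is_exponential : is_exponential (@codiag Y) frob_p f (@codiag X) frob_e.
Proof.
split; [by case | split].
  move=> [y|y] x /= fxy.
    exists (inl x); split; first by rewrite /= fxy.
    by move=> [z|z] /= [zy <-] //; discriminate zy.
  exists (inr x); split; first by rewrite /= fxy.
  by move=> [z|z] /= [zy <-] //; discriminate zy.
move=> y s hs.
case: (hs (inl y) erefl) => [[x|y'] sx //= [fx]].
case: (hs (inr y) erefl) => [[x'|y'] sy //= [y'y]].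
exists x; split.
  split=> // -[z|z] /= ->; first by rewrite fx sx.
  by rewrite fx sy y'y.
by move=> x2 [fx2 h]; have := h (inl x2) erefl; rewrite /= fx2 sx => -[].
Qed.

Lemma projection_formula (a : tam T X) (b : tam T Y) :
  ttr f a * b = ttr f (a * tres f b).
Proof.
have ep : equivariant frob_p by apply: sum_map_equivariant.
have ee : equivariant frob_e by apply: sum_map_equivariant.
case: (tam_sum_glue a b) => c [ca cb].
have := tdistr (@codiag_equivariant _) ep ef (@codiag_equivariant _) ee
  codiag_is_exponential c.
rewrite !tnm_codiag.
rewrite (ttr_pullback ep sinl_equivariant sinl_equivariant ef
  (sum_map_pullback_sinl f id)).
rewrite (ttr_pullback ep sinr_equivariant sinr_equivariant equivariant_id
  (sum_map_pullback_sinr f id)) ttr_id.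
rewrite -(tres_comp sinl_equivariant ee) -(tres_comp sinr_equivariant ee).
rewrite (@eq_tres _ T _ _ (frob_e \o sinl) sinl) //.
rewrite (@eq_tres _ T _ _ (frob_e \o sinr) (sinr \o f)) //.
by rewrite (tres_comp ef sinr_equivariant) ca cb.
Qed.

End Frobenius.
End ProjectionFormula.

Section OrbitMapFactorization.
Variables (gT : finGroupType) (K H : {group gT}) (phi : orbit K -> orbit H).
Hypothesis ephi : equivariant phi.
Local Open Scope group_scope.

Let g := repr (val (phi (orbit_base K))).
Let A := (H :^ g)%G.
(* [H'] is [H] as a set but not convertibly, so its orbit is only isomorphic
   to that of [H], through [oproj]. *)
Let H' := (A :^ g^-1)%G.
Let conjV := @oconj gT A g^-1.
Let conjV_inv := @oproj gT _ A \o @oconj gT H' g.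

Let phi_base_val : val (phi (orbit_base K)) = H :* g.
Proof. by case: (orbit_val (phi (orbit_base K))) => x e; rewrite /g e rcoset_repr. Qed.

Lemma sub_orbit_map_conj : K \subset A.
Proof.
apply/subsetP=> k Kk.
have base_k : gact (orbit_base K) k = orbit_base K.
  by apply: val_inj; rewrite /= rcoset1 rcoset_id // rcoset1.
have := ephi (orbit_base K) k; rewrite base_k => /(congr1 val).
rewrite /= phi_base_val -rcosetM => /esym /rcoset_eqP.
by rewrite mem_rcoset mem_conjg /conjg invgK mulgA.
Qed.

Let sH'H : H' \subset H. Proof. by rewrite /H' /A /= conjsgK. Qed.
Let sHH' : H \subset H'. Proof. by rewrite /H' /A /= conjsgK. Qed.
Let sH'gA : (H' :^ g)%G \subset A. Proof. by rewrite /H' /= conjsgKV. Qed.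

Let conjV_equivariant : equivariant conjV. Proof. exact: oconj_equivariant. Qed.

Let conjV_inv_equivariant : equivariant conjV_inv.
Proof. exact: equivariant_comp (@oconj_equivariant _ H' g) (oproj_equivariant sH'gA). Qed.

Let conjVK : cancel conjV conjV_inv.
Proof.
apply: (eq_orbit_map (equivariant_comp conjV_equivariant conjV_inv_equivariant)
  equivariant_id); apply: val_inj.
have g_in : g \in val (conjV (orbit_base A)).
  by rewrite (oconj_val _ (mem_orbit_base A)) invgK mulg1 rcoset_refl.
have one_in : 1 \in val (@oconj gT H' g (conjV (orbit_base A))).
  by rewrite (oconj_val _ g_in) mulVg rcoset_refl.
exact: (oproj_val sH'gA one_in).
Qed.

Let conjV_invK : cancel conjV_inv conjV.
Proof.
apply: (eq_orbit_map (equivariant_comp conjV_inv_equivariant conjV_equivariant)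
  equivariant_id); apply: val_inj.
have gV_in : g^-1 \in val (oconj g (orbit_base H')).
  by rewrite (oconj_val _ (mem_orbit_base H')) mulg1 rcoset_refl.
have gV_in' : g^-1 \in val (conjV_inv (orbit_base H')).
  by rewrite [val _](oproj_val sH'gA gV_in) rcoset_refl.
by rewrite [val _](oconj_val _ gV_in') invgK mulgV.
Qed.

Let oproj_H'K : cancel (@oproj gT _ H') (@oproj gT _ H).
Proof.
apply: (eq_orbit_map (equivariant_comp (oproj_equivariant sHH') (oproj_equivariant sH'H))
  equivariant_id); apply: val_inj.
have one_in : 1 \in val (@oproj gT _ H' (orbit_base H)).
  by rewrite (oproj_val sHH' (mem_orbit_base H)) rcoset_refl.
exact: (oproj_val sH'H one_in).
Qed.

Let oproj_HK' : cancel (@oproj gT _ H) (@oproj gT _ H').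
Proof.
apply: (eq_orbit_map (equivariant_comp (oproj_equivariant sH'H) (oproj_equivariant sHH'))
  equivariant_id); apply: val_inj.
have one_in : 1 \in val (@oproj gT _ H (orbit_base H')).
  by rewrite (oproj_val sH'H (mem_orbit_base H')) rcoset_refl.
exact: (oproj_val sHH' one_in).
Qed.

Lemma orbit_map_factor : phi =1 @oproj gT _ H \o conjV \o @oproj gT _ A.
Proof.
apply: eq_orbit_map => //.
  apply: equivariant_comp (oproj_equivariant sub_orbit_map_conj) _.
  exact: equivariant_comp conjV_equivariant (oproj_equivariant sH'H).
apply: val_inj; rewrite phi_base_val.
have one_in : 1 \in val (@oproj gT _ A (orbit_base K)).
  by rewrite (oproj_val sub_orbit_map_conj (mem_orbit_base K)) rcoset_refl.
have g_in : g \in val (conjV (@oproj gT _ A (orbit_base K))).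
  by rewrite (oconj_val _ one_in) invgK mulg1 rcoset_refl.
by rewrite [RHS](oproj_val sH'H g_in).
Qed.

Variables (T : tambara gT) (I : tfamily T).
Hypothesis hI : is_tideal I.

Let I_res := hI.2.1.
Let I_tr := hI.2.2.1.
Let I_nm := hI.2.2.2.1.
Let I_conj := hI.2.2.2.2.

Lemma tideal_ttr_orbit_map (a : tam T (orbit K)) : I a -> I (ttr phi a).
Proof.
move=> Ia; rewrite (eq_ttr T orbit_map_factor).
have eA := oproj_equivariant sub_orbit_map_conj.
rewrite (ttr_comp (equivariant_comp eA conjV_equivariant) (oproj_equivariant sH'H)).
rewrite (ttr_comp eA conjV_equivariant).
by apply: (I_tr sH'H); apply: I_conj; apply: (I_tr sub_orbit_map_conj).
Qed.

(* Norm and transfer along the isomorphism [conjV] are both restriction along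
   its inverse. *)
Lemma tideal_tnm_orbit_map (a : tam T (orbit K)) : I a -> I (tnm phi a).
Proof.
move=> Ia; rewrite (eq_tnm T orbit_map_factor).
have eA := oproj_equivariant sub_orbit_map_conj.
rewrite (tnm_comp (equivariant_comp eA conjV_equivariant) (oproj_equivariant sH'H)).
rewrite (tnm_comp eA conjV_equivariant).
rewrite (tnm_iso conjV_equivariant conjV_inv_equivariant conjVK conjV_invK).
rewrite -(ttr_iso conjV_equivariant conjV_inv_equivariant conjVK conjV_invK).
by apply: (I_nm sH'H); apply: I_conj; apply: (I_nm sub_orbit_map_conj).
Qed.

Lemma tideal_tres_orbit_map (b : tam T (orbit H)) : I b -> I (tres phi b).
Proof.
move=> Ib; rewrite (eq_tres T orbit_map_factor).
have eA := oproj_equivariant sub_orbit_map_conj.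
have eH := oproj_equivariant sH'H.
rewrite (tres_comp (equivariant_comp eA conjV_equivariant) eH).
rewrite (tres_comp eA conjV_equivariant).
rewrite -(ttr_iso (oproj_equivariant sHH') eH oproj_H'K oproj_HK').
rewrite -(ttr_iso conjV_inv_equivariant conjV_equivariant conjV_invK conjVK).
apply: (I_res sub_orbit_map_conj).
rewrite (ttr_comp (@oconj_equivariant _ H' g) (oproj_equivariant sH'gA)).
by apply: (I_tr sH'gA); apply: I_conj; apply: (I_tr sHH').
Qed.

End OrbitMapFactorization.

Section Orbitwise.
Variables (gT : finGroupType) (T : tambara gT).

Definition orbitwise (P : tfamily T) (V : gset gT) (c : tam T V) :=
  forall (S : {group gT}) (k : orbit S -> V), equivariant k -> P S (tres k c).

Lemma orbitwise_tres (P : tfamily T) (V V' : gset gT) (h : V' -> V) (c : tam T V) :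
  equivariant h -> orbitwise P c -> orbitwise P (tres h c).
Proof.
by move=> eh Pc S k ek; rewrite -tres_comp //; apply: Pc; apply: equivariant_comp.
Qed.

Lemma tideal_ttr_orbitwise (J : tfamily T) (W : gset gT) (H : {group gT})
    (w : W -> orbit H) (c : tam T W) :
  is_tideal J -> equivariant w -> orbitwise J c -> J H (ttr w c).
Proof.
move=> hJ; have [n] := ubnP #|W|; elim: n => // n IHn in W w c *.
rewrite ltnS => leWn ew Jc.
case: (pickP (@predT W)) => [u _|W0]; last first.
  by rewrite (tam_card0_eq0 (eq_card0 W0) c) (ttr0 T ew); exact: (hJ.1 H).1.
have ei := orbit_incl_equivariant u; have ej := orbitC_incl_equivariant u.
rewrite (ttr_coproduct ei ej (orbit_orbitC_coproduct u) _ ew).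
apply: (hJ.1 H).2.1.
  by apply: (tideal_ttr_orbit_map (equivariant_comp ei ew) hJ); apply: Jc.
apply: IHn; first exact: leq_trans (card_orbitC u) leWn.
  exact: equivariant_comp ej ew.
exact: orbitwise_tres.
Qed.

(* [k] is the inclusion of the orbit of a point over the base point of [G/S],
   and [t] the norm from the rest of [V]. *)
Lemma tnm_surjective_orbit (S : {group gT}) (V : gset gT) (v : V -> orbit S)
    (c : tam T V) :
  equivariant v -> surjective v ->
  exists (L : {group gT}) (k : orbit L -> V) (t : tam T (orbit S)),
    equivariant k /\ tnm v c = tnm (v \o k) (tres k c) * t.
Proof.
move=> ev sv; case: (sv (orbit_base S)) => u _.
exists (gstab u), (orbit_incl u), (tnm (v \o orbitC_incl u) (tres (orbitC_incl u) c)).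
split; first exact: orbit_incl_equivariant.
exact: (tnm_coproduct (orbit_incl_equivariant u) (orbitC_incl_equivariant u)
  (orbit_orbitC_coproduct u) c ev).
Qed.

End Orbitwise.

Section NormalForm.
Variables (gT : finGroupType) (T : tambara gT) (B : tfamily T).

Lemma orbitwise_sum (V1 V2 : gset gT) (g : tam T (sum_gset V1 V2)) :
  orbitwise B (tres sinl g) -> orbitwise B (tres sinr g) -> orbitwise B g.
Proof.
move=> Bg1 Bg2 S phi ephi.
case: (orbit_map_sum ephi) => [[phi1 ephi1 phiE]|[phi2 ephi2 phiE]].
  by rewrite (eq_tres T phiE) (tres_comp ephi1 sinl_equivariant); apply: Bg1.
by rewrite (eq_tres T phiE) (tres_comp ephi2 sinr_equivariant); apply: Bg2.
Qed.

Definition normal_form (X : gset gT) (a : tam T X) :=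
  exists (W V : gset gT) (w : W -> X) (v : V -> W) (r : tam T W) (g : tam T V),
    [/\ equivariant w, equivariant v, surjective v, orbitwise B g
      & a = ttr w (r * tnm v g)].

Lemma normal_form_orbitwise (X : gset gT) (a : tam T X) :
  orbitwise B a -> normal_form a.
Proof.
move=> Ba; exists X, X, id, id, 1, a; split=> //; first by move=> y; exists y.
by rewrite mul1r tnm_id ttr_id.
Qed.

Lemma normal_form0 (X : gset gT) : normal_form (0 : tam T X).
Proof.
exists gset0, gset0, (gset0_map X), id, 0, 0.
split; [by case | by case | by case | | by rewrite ttr_gset0].
by move=> S phi; case: (phi (orbit_base S)).
Qed.

Lemma normal_formD (X : gset gT) (a b : tam T X) :
  normal_form a -> normal_form b -> normal_form (a + b).
Proof.
move=> [W1 [V1 [w1 [v1 [r1 [g1 [ew1 ev1 sv1 Bg1 ->]]]]]]].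
move=> [W2 [V2 [w2 [v2 [r2 [g2 [ew2 ev2 sv2 Bg2 ->]]]]]]].
case: (tam_sum_glue r1 r2) => r [r_l r_r].
case: (tam_sum_glue g1 g2) => g [g_l g_r].
have ew : equivariant (sum_case w1 w2) by apply: sum_case_equivariant.
have ev : equivariant (sum_map v1 v2) by apply: sum_map_equivariant.
exists (sum_gset W1 W2), (sum_gset V1 V2), (sum_case w1 w2), (sum_map v1 v2), r, g.
split=> //; first exact: sum_map_surjective.
  by apply: orbitwise_sum; rewrite ?g_l ?g_r.
rewrite (ttr_coproduct sinl_equivariant sinr_equivariant sum_gset_is_coproduct _ ew).
rewrite !(tresM sinl_equivariant) !(tresM sinr_equivariant) r_l r_r.
rewrite (tnm_pullback ev sinl_equivariant sinl_equivariant ev1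
  (sum_map_pullback_sinl v1 v2)).
rewrite (tnm_pullback ev sinr_equivariant sinr_equivariant ev2
  (sum_map_pullback_sinr v1 v2)).
by rewrite g_l g_r.
Qed.

Lemma normal_formMl (X : gset gT) (t a : tam T X) : normal_form a -> normal_form (t * a).
Proof.
move=> [W [V [w [v [r [g [ew ev sv Bg ->]]]]]]].
exists W, V, w, v, (tres w t * r), g; split=> //.
by rewrite mulrC projection_formula // mulrC mulrA.
Qed.

Lemma normal_form_ttr (X Y : gset gT) (h : X -> Y) (a : tam T X) :
  equivariant h -> normal_form a -> normal_form (ttr h a).
Proof.
move=> eh [W [V [w [v [r [g [ew ev sv Bg ->]]]]]]].
exists W, V, (h \o w), v, r, g; split=> //; first exact: equivariant_comp.
by rewrite ttr_comp.
Qed.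

Lemma normal_form_tres (X Y : gset gT) (h : Y -> X) (a : tam T X) :
  equivariant h -> normal_form a -> normal_form (tres h a).
Proof.
move=> eh [W [V [w [v [r [g [ew ev sv Bg ->]]]]]]].
have e1 := pb1_equivariant ew eh; have e2 := pb2_equivariant ew eh.
have f1 := pb1_equivariant ev e1; have f2 := pb2_equivariant ev e1.
exists (pullback_gset ew eh), (pullback_gset ev e1), (pb2 ew eh), (pb2 ev e1),
  (tres (pb1 ew eh) r), (tres (pb1 ev e1) g); split=> //.
- exact: pb2_surjective.
- exact: orbitwise_tres.
rewrite (ttr_pullback ew eh e1 e2 (pullback_gset_is_pullback ew eh)) (tresM e1).
by rewrite (tnm_pullback ev e1 f1 f2 (pullback_gset_is_pullback ev e1)).
Qed.

(* The distributive law rewrites [nm_h tr_w] as [tr nm res] through the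
   dependent product of [w] along [h]. *)
Lemma normal_form_tnm (X Y : gset gT) (h : X -> Y) (a : tam T X) :
  equivariant h -> surjective h -> normal_form a -> normal_form (tnm h a).
Proof.
move=> eh sh [W [V [w [v [r [g [ew ev sv Bg ->]]]]]]].
have eq := dprod_proj_equivariant eh ew.
have ef := dprod_eval_proj_equivariant eh ew.
have ee := dprod_eval_equivariant eh ew.
have f1 := pb1_equivariant ev ee; have f2 := pb2_equivariant ev ee.
exists (dprod_gset eh ew), (pullback_gset ev ee), (dprod_proj eh ew),
  (dprod_eval_proj eh ew \o pb2 ev ee),
  (tnm (dprod_eval_proj eh ew) (tres (dprod_eval eh ew) r)),
  (tres (pb1 ev ee) g); split=> //.
- move=> u; case: (dprod_eval_proj_surjective eh ew sh u) => z <-.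
  by case: (pb2_surjective ev ee sv z) => y <-; exists y.
- exact: orbitwise_tres.
rewrite (tdistr eh ew eq ef ee (dprod_is_exponential eh ew)).
rewrite (tresM ee) (tnmM ef) (tnm_comp f2 ef).
by rewrite (tnm_pullback ev ee f1 f2 (pullback_gset_is_pullback ev ee)).
Qed.

Lemma normal_form_tideal : is_tideal (fun H (a : tam T (orbit H)) => normal_form a).
Proof.
split.
  move=> H; split; first exact: normal_form0.
  by split; [exact: normal_formD | exact: normal_formMl].
split; first by move=> H K sHK a; apply: normal_form_tres; exact: oproj_equivariant.
split; first by move=> H K sHK a; apply: normal_form_ttr; exact: oproj_equivariant.
split; last by move=> H g a; apply: normal_form_ttr; exact: oconj_equivariant.
move=> H K sHK a.
by apply: normal_form_tnm; [exact: oproj_equivariant | exact: oproj_surjective].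
Qed.

End NormalForm.

Section ProductForm.
Variables (gT : finGroupType) (T : tambara gT) (B1 B2 : tfamily T).

Definition product_form (X : gset gT) (e : tam T X) :=
  exists (W V1 V2 : gset gT) (w : W -> X) (v1 : V1 -> W) (v2 : V2 -> W)
    (r : tam T W) (g1 : tam T V1) (g2 : tam T V2),
    [/\ equivariant w, equivariant v1, equivariant v2, surjective v1 & surjective v2]
    /\ [/\ orbitwise B1 g1, orbitwise B2 g2 & e = ttr w (r * tnm v1 g1 * tnm v2 g2)].

(* Both factors are moved over the pullback of [w1] and [w2] by the
   projection formula and Beck-Chevalley. *)
Lemma normal_form_mul (X : gset gT) (a b : tam T X) :
  normal_form B1 a -> normal_form B2 b -> product_form (a * b).
Proof.
move=> [W1 [V1 [w1 [v1 [r1 [g1 [ew1 ev1 sv1 Bg1 ->]]]]]]].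
move=> [W2 [V2 [w2 [v2 [r2 [g2 [ew2 ev2 sv2 Bg2 ->]]]]]]].
have ep1 := pb1_equivariant ew2 ew1; have ep2 := pb2_equivariant ew2 ew1.
have eq11 := pb1_equivariant ev1 ep2; have eq12 := pb2_equivariant ev1 ep2.
have eq21 := pb1_equivariant ev2 ep1; have eq22 := pb2_equivariant ev2 ep1.
exists (pullback_gset ew2 ew1), (pullback_gset ev1 ep2), (pullback_gset ev2 ep1),
  (w1 \o pb2 ew2 ew1), (pb2 ev1 ep2), (pb2 ev2 ep1),
  (tres (pb2 ew2 ew1) r1 * tres (pb1 ew2 ew1) r2),
  (tres (pb1 ev1 ep2) g1), (tres (pb1 ev2 ep1) g2).
split; split; [exact: equivariant_comp ep2 ew1 | exact: eq12 | exact: eq22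
  | exact: pb2_surjective | exact: pb2_surjective
  | exact: orbitwise_tres | exact: orbitwise_tres |].
rewrite projection_formula //.
rewrite (ttr_pullback ew2 ew1 ep1 ep2 (pullback_gset_is_pullback ew2 ew1)).
rewrite mulrC projection_formula // (ttr_comp ep2 ew1); congr (ttr _ _).
rewrite !(tresM ep2) !(tresM ep1).
rewrite (tnm_pullback ev1 ep2 eq11 eq12 (pullback_gset_is_pullback ev1 ep2)).
rewrite (tnm_pullback ev2 ep1 eq21 eq22 (pullback_gset_is_pullback ev2 ep1)).
by congr (ttr _ _); ring.
Qed.

End ProductForm.

Section Generators.
Variables (gT : finGroupType) (T : tambara gT).

Lemma tgen_tideal (S : tfamily T) : is_tideal (tgen S).
Proof.
split.
  move=> H; split; first by move=> J hJ _; exact: (hJ.1 H).1.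
  split; first by move=> a b Sa Sb J hJ SJ; apply: (hJ.1 H).2.1; [exact: Sa | exact: Sb].
  by move=> r a Sa J hJ SJ; apply: (hJ.1 H).2.2; exact: Sa.
split; first by move=> H K sHK a Sa J hJ SJ; apply: hJ.2.1 => //; exact: Sa.
split; first by move=> H K sHK a Sa J hJ SJ; apply: hJ.2.2.1 => //; exact: Sa.
split; first by move=> H K sHK a Sa J hJ SJ; apply: hJ.2.2.2.1 => //; exact: Sa.
by move=> H g a Sa J hJ SJ; apply: hJ.2.2.2.2 => //; exact: Sa.
Qed.

Lemma sub_tgen (S : tfamily T) H x : S H x -> tgen S H x.
Proof. by move=> Sx J _; apply. Qed.

Definition gens_family (s : seq {H : {group gT} & tam T (orbit H)}) : tfamily T :=
  fun K y => List.In (existT (fun K => tam T (orbit K)) K y) s.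
Arguments gens_family s H _ : clear implicits.

Definition restricted_gens (s : seq {H : {group gT} & tam T (orbit H)}) : tfamily T :=
  fun S d => exists2 e, List.In e s &
    exists2 psi : orbit S -> orbit (projT1 e), equivariant psi & d = tres psi (projT2 e).
Arguments restricted_gens s H _ : clear implicits.

Lemma tgen_normal_form s H x :
  tgen (gens_family s) H x -> normal_form (restricted_gens s) x.
Proof.
move=> sx; apply: (sx _ (normal_form_tideal (restricted_gens s))) => K y sy.
apply: normal_form_orbitwise => S phi ephi.
by exists (existT _ K y) => //; exists phi.
Qed.

Lemma In_enum (U : finType) (x : U) : List.In x (enum U).
Proof.
have : x \in enum U by rewrite mem_enum.
elim: (enum U) => [//|y s IHs]; rewrite in_cons => /orP [/eqP ->|/IHs]; by [left|right].
Qed.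

Definition equivariantb (X Y : gset gT) (f : {ffun X -> Y}) :=
  [forall x, [forall g, f (gact x g) == gact (f x) g]].

Definition orbit_maps (L S : {group gT}) : seq (orbit L -> orbit S) :=
  List.map (fun (f : {ffun orbit L -> orbit S}) x => f x)
    (List.filter (@equivariantb _ _) (enum {ffun orbit L -> orbit S})).

Lemma In_orbit_maps L S (phi : orbit L -> orbit S) :
  List.In phi (orbit_maps L S) <-> equivariant phi.
Proof.
rewrite List.in_map_iff; split=> [[f [<- /List.filter_In [_ /forallP ef]]] x g|ephi].
  exact/eqP/(forallP (ef x) g).
exists [ffun x => phi x]; split.
  by apply: functional_extensionality => x; rewrite ffunE.
apply/List.filter_In; split; first exact: In_enum.
by apply/forallP=> x; apply/forallP=> g; rewrite !ffunE ephi.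
Qed.

Definition norm_res_gens (s : seq {H : {group gT} & tam T (orbit H)}) (S : {group gT}) :
    seq (tam T (orbit S)) :=
  List.flat_map (fun e => List.flat_map (fun L => List.flat_map (fun phi =>
    List.map (fun psi => tnm phi (tres psi (projT2 e))) (orbit_maps L (projT1 e)))
    (orbit_maps L S)) (enum {group gT})) s.

Lemma In_norm_res_gens s S y :
  List.In y (norm_res_gens s S) <->
  exists e (L : {group gT}) (phi : orbit L -> orbit S)
      (psi : orbit L -> orbit (projT1 e)),
    [/\ List.In e s, equivariant phi, equivariant psi
      & y = tnm phi (tres psi (projT2 e))].
Proof.
rewrite List.in_flat_map; split.
  move=> [e [se /List.in_flat_map [L [_ /List.in_flat_map [phi
    [/In_orbit_maps ephi /List.in_map_iff [psi [<- /In_orbit_maps epsi]]]]]]]].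
  by exists e, L, phi, psi.
move=> [e [L [phi [psi [se ephi epsi ->]]]]]; exists e; split=> //.
apply/List.in_flat_map; exists L; split; first exact: In_enum.
apply/List.in_flat_map; exists phi; split; first exact/In_orbit_maps.
by apply/List.in_map_iff; exists psi; split=> //; apply/In_orbit_maps.
Qed.

Definition prod_gens (sI sJ : seq {H : {group gT} & tam T (orbit H)}) :
    seq {H : {group gT} & tam T (orbit H)} :=
  List.flat_map (fun S => List.flat_map (fun a =>
    List.map (fun b => existT (fun K => tam T (orbit K)) S (a * b)) (norm_res_gens sJ S))
    (norm_res_gens sI S)) (enum {group gT}).

Lemma In_prod_gens sI sJ z :
  List.In z (prod_gens sI sJ) <->
  exists S a b, [/\ List.In a (norm_res_gens sI S), List.In b (norm_res_gens sJ S)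
    & z = existT (fun K => tam T (orbit K)) S (a * b)].
Proof.
rewrite List.in_flat_map; split.
  move=> [S [_ /List.in_flat_map [a [a_in /List.in_map_iff [b [<- b_in]]]]]].
  by exists S, a, b.
move=> [S [a [b [a_in b_in ->]]]]; exists S; split; first exact: In_enum.
by apply/List.in_flat_map; exists a; split=> //; apply/List.in_map_iff; exists b.
Qed.

Lemma norm_res_gens_tideal (I : tfamily T) s :
  is_tideal I -> (forall K y, gens_family s K y -> I K y) ->
  forall S a, List.In a (norm_res_gens s S) -> I S a.
Proof.
move=> hI sI S a /In_norm_res_gens [[K y] [L [phi [psi [se ephi epsi ->]]]]].
apply: (tideal_tnm_orbit_map ephi hI); apply: (tideal_tres_orbit_map epsi hI).
exact: sI.
Qed.

Lemma tres_tnm_restricted_gens s (W V : gset gT) (v : V -> W) (g : tam T V)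
    (S : {group gT}) (k : orbit S -> W) :
  equivariant v -> surjective v -> equivariant k -> orbitwise (restricted_gens s) g ->
  exists b t, List.In b (norm_res_gens s S) /\ tres k (tnm v g) = b * t.
Proof.
move=> ev sv ek Bg; have e1 := pb1_equivariant ev ek; have e2 := pb2_equivariant ev ek.
rewrite (tnm_pullback ev ek e1 e2 (pullback_gset_is_pullback ev ek)).
have [L [k' [t [ek' ->]]]] := tnm_surjective_orbit (tres (pb1 ev ek) g) e2
  (pb2_surjective ev ek sv).
have [e se [psi epsi ->]] := orbitwise_tres e1 Bg ek'.
exists (tnm (pb2 ev ek \o k') (tres psi (projT2 e))), t; split=> //.
by apply/In_norm_res_gens; exists e, L, (pb2 ev ek \o k'), psi; split=> //;
  apply: equivariant_comp.
Qed.

(* [x] is a transfer, so it suffices to restrict to orbits, where each norm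
   splits off an element of [norm_res_gens]. *)
Lemma product_form_tgen sI sJ (H : {group gT}) (x : tam T (orbit H)) :
  product_form (restricted_gens sI) (restricted_gens sJ) x ->
  tgen (gens_family (prod_gens sI sJ)) H x.
Proof.
move=> [W [V1 [V2 [w [v1 [v2 [r [g1 [g2 [[ew ev1 ev2 sv1 sv2] [Bg1 Bg2 ->]]]]]]]]]]].
have hQ := tgen_tideal (gens_family (prod_gens sI sJ)).
apply: (tideal_ttr_orbitwise hQ ew) => S k ek; rewrite !(tresM ek).
have [b1 [t1 [b1_in ->]]] := tres_tnm_restricted_gens ev1 sv1 ek Bg1.
have [b2 [t2 [b2_in ->]]] := tres_tnm_restricted_gens ev2 sv2 ek Bg2.
have -> : tres k r * (b1 * t1) * (b2 * t2) = tres k r * t1 * t2 * (b1 * b2) by ring.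
apply: (hQ.1 S).2.2; apply: sub_tgen; apply/In_prod_gens.
by exists S, b1, b2.
Qed.

Lemma tprod_sub_tgen_prod_gens (I J : tfamily T) sI sJ :
  (forall H x, I H x -> tgen (gens_family sI) H x) ->
  (forall H x, J H x -> tgen (gens_family sJ) H x) ->
  forall H x, tprod I J H x -> tgen (gens_family (prod_gens sI sJ)) H x.
Proof.
move=> I_gen J_gen H x IJx; apply: (IJx _ (tgen_tideal _)) => K y [a [b [Ia [Jb ->]]]].
apply: product_form_tgen; apply: normal_form_mul; apply: tgen_normal_form.
  exact: I_gen.
exact: J_gen.
Qed.

Lemma tgen_prod_gens_sub_tprod (I J : tfamily T) sI sJ :
  is_tideal I -> is_tideal J ->
  (forall K y, gens_family sI K y -> I K y) ->
  (forall K y, gens_family sJ K y -> J K y) ->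
  forall H x, tgen (gens_family (prod_gens sI sJ)) H x -> tprod I J H x.
Proof.
move=> hI hJ sI_I sJ_J H x Qx; apply: (Qx _ (tgen_tideal _)) => K y Ky.
suff gens_IJ z : List.In z (prod_gens sI sJ) -> tprod I J (projT1 z) (projT2 z).
  exact: (gens_IJ _ Ky).
case/In_prod_gens=> S [a [b [a_in b_in ->]]]; apply: sub_tgen; exists a, b.
by split; [exact: norm_res_gens_tideal hI sI_I _ _ a_in
  | split; [exact: norm_res_gens_tideal hJ sJ_J _ _ b_in |]].
Qed.

End Generators.

Theorem corollary4p20 (gT : finGroupType) (T : tambara gT)
  (I J : tfamily T) :
  is_tideal I -> is_tideal J -> tfin_gen I -> tfin_gen J ->
  tfin_gen (tprod I J).
Proof.
move=> hI hJ [sI eI] [sJ eJ]; exists (prod_gens sI sJ) => H x; split.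
  by apply: tprod_sub_tgen_prod_gens => K y; [move/eI | move/eJ].
apply: tgen_prod_gens_sub_tprod => // K y Ky; [apply/eI | apply/eJ]; exact: sub_tgen.
Qed.
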